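(* Fix $m\ge3$ and let $f$ be an axis rule on profiles over a candidate set $C$ with $|C|=m$ that is the scoring rule induced by $\mathrm{cost}(A,\triangleleft)=g(x_{A,\triangleleft})$ for a function $g:\{0,1\}^m\to\mathbb R_{\ge0}$ with $g(x)=0$ iff the ones of $x$ are contiguous and $g(x)=g(\overleftarrow{x})$ for all $x$. If $f$ satisfies ballot monotonicity, then there is a function $h$ such that for every ballot $A$ and axis $\triangleleft$ with $A$ not an interval of $\triangleleft$, $\mathrm{cost}(A,\triangleleft)=h(k_{\mathrm{app}},k_{\mathrm{int}})$, where $k_{\mathrm{app}}=|A|$ and $k_{\mathrm{int}}$ is the number of interfering candidates of $A$ on $\triangleleft$.
   Context: Let $C$ be a finite set of $m$ candidates. An approval ballot is a nonempty subset $A\subseteq C$; a profile is a finite sequence of ballots. An axis is a strict linear order $\triangleleft$ on $C$; $a\trianglelefteq b$ means $a\triangleleft b$ or $a=b$. A ballot $A$ is an interval of $\triangleleft$ if for all $a,b\in A$ and every $c$ with $a\triangleleft c\triangleleft b$ we have $c\in A$; a candidate $c\notin A$ with $a\triangleleft c\triangleleft b$ for some $a,b\in A$ is interfering. If $\triangleleft=c_1c_2\cdots c_m$, the approval vector $x_{A,\triangleleft}\in\{0,1\}^m$ has $i$-th entry $1$ iff $c_i\in A$; $\overleftarrow{x}$ denotes the reversed vector. The scoring rule induced by $\mathrm{cost}$ is $f(P)=\arg\min_{\triangleleft}\sum_{A\in P}\mathrm{cost}(A,\triangleleft)$. $f$ satisfies ballot monotonicity if for every profile $P$, ballot $A\in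 P$ and $\triangleleft\in f(P)$ such that $A$ is not an interval of $\triangleleft$, we have $\triangleleft\in f(P')$, where $P'$ replaces $A$ by $A'=\{x\in C:\exists y,z\in A,\ y\trianglelefteq x\trianglelefteq z\}$. *)

From HB Require Import structures.
From mathcomp Require Import all_boot all_order all_algebra.
From mathcomp Require Import reals.
Set Implicit Arguments. Unset Strict Implicit. Unset Printing Implicit Defensive.
Import Order.TTheory GRing.Theory Num.Theory.
Local Open Scope ring_scope.

Definition axis (C : finType) := {ax : {ffun 'I_#|C| -> C} | injectiveb ax}.

Section Axes.
Variable C : finType.

Definition axf (ax : axis C) : 'I_#|C| -> C := val ax.

Definition axis_lt (ax : axis C) (a b : C) : bool :=
  [exists i : 'I_#|C|, exists j : 'I_#|C|,
     [&& (i < j)%N, axf ax i == a & axf ax j == b]].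

Definition axis_le (ax : axis C) (a b : C) : bool := (a == b) || axis_lt ax a b.

Definition is_interval (A : {set C}) (ax : axis C) : Prop :=
  forall a b c : C, a \in A -> b \in A -> axis_lt ax a c -> axis_lt ax c b -> c \in A.

Definition interfering (A : {set C}) (ax : axis C) : {set C} :=
  [set c | (c \notin A) &&
     [exists a, exists b, [&& a \in A, b \in A, axis_lt ax a c & axis_lt ax c b]]].

Definition appvec (A : {set C}) (ax : axis C) : {ffun 'I_#|C| -> bool} :=
  [ffun i => axf ax i \in A].

Definition interval_closure (A : {set C}) (ax : axis C) : {set C} :=
  [set x | [exists y, exists z, [&& y \in A, z \in A, axis_le ax y x & axis_le ax x z]]].

End Axes.

Definition revvec (n : nat) (x : {ffun 'I_n -> bool}) : {ffun 'I_n -> bool} :=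
  [ffun i => x (rev_ord i)].

Definition contiguous (n : nat) (x : {ffun 'I_n -> bool}) : Prop :=
  forall i j k : 'I_n, (i <= j)%N -> (j <= k)%N -> x i -> x k -> x j.

Section Rule.
Variables (C : finType) (R : realType).
Variable g : {ffun 'I_#|C| -> bool} -> R.

Definition cost (A : {set C}) (ax : axis C) : R := g (appvec A ax).

Definition is_profile (P : seq {set C}) : Prop := all (fun A => A != set0) P.

Definition total_cost (P : seq {set C}) (ax : axis C) : R :=
  \sum_(A <- P) cost A ax.

Definition in_rule (P : seq {set C}) (ax : axis C) : Prop :=
  forall ax' : axis C, total_cost P ax <= total_cost P ax'.

Definition ballot_monotone : Prop :=
  forall (P : seq {set C}) (i : nat) (ax : axis C),
    is_profile P -> (i < size P)%N -> in_rule P ax ->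
    ~ is_interval (nth set0 P i) ax ->
    in_rule (set_nth set0 P i (interval_closure (nth set0 P i) ax)) ax.

End Rule.

From HB Require Import structures.
From mathcomp Require Import all_boot all_order all_algebra.
From mathcomp Require Import reals.
From mathcomp Require Import lra zify.
From Stdlib Require Import Classical.
Import Order.TTheory GRing.Theory Num.Theory.
Local Open Scope ring_scope.

(* Take as profile the list of all nonempty ballots. Since A |-> x_{A,ax} is a
   bijection onto all vectors, its total cost is the same for every axis, so
   every axis is a winner. Ballot monotonicity applied to a non-interval ballot
   A then shows cost(A, ax) <= cost(A, ax') for every axis ax' on which the
   interval closure A' of A (w.r.t. ax) is still an interval. Given
   k = |A| and i = |A' \ A| one can always build an axis ax' whose vector for A
   is 1^(k-1) 0^i 1 0^(m-k-i) and on which A' is again an interval and again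
   the closure of A; applying the inequality in both directions shows that
   cost(A, ax) = g(1^(k-1) 0^i 1 0^(m-k-i)). *)

Section AxisPositions.
Context {C : finType}.
Implicit Types (ax : axis C) (A : {set C}).

Lemma axf_inj ax : injective (axf ax).
Proof. by apply/injectiveP; exact: (valP ax). Qed.

Lemma axf_surj ax c : exists i, axf ax i = c.
Proof.
have /(_ c) /codomP [i ->] := inj_card_onto (@axf_inj ax) (eq_leq (esym (card_ord _))).
by exists i.
Qed.

Lemma axis_ltE ax i j : axis_lt ax (axf ax i) (axf ax j) = (i < j)%N.
Proof.
apply/existsP/idP => [[i' /existsP [j' /and3P [ij /eqP/axf_inj<- /eqP/axf_inj<-]]] //|ij].
by exists i; apply/existsP; exists j; rewrite ij !eqxx.
Qed.

Lemma axis_leE ax i j : axis_le ax (axf ax i) (axf ax j) = (i <= j)%N.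
Proof. by rewrite /axis_le axis_ltE (inj_eq (@axf_inj ax)) [RHS]leq_eqVlt. Qed.

Lemma is_interval_contiguous A ax : is_interval A ax <-> contiguous (appvec A ax).
Proof.
split=> [intA i j k ij jk|contA a b c].
  rewrite !ffunE => iA kA.
  have [<- //|nij] := eqVneq i j; have [-> //|njk] := eqVneq j k.
  by apply: (intA _ _ _ iA kA); rewrite axis_ltE ltn_neqAle ?ij ?jk andbT
    ?(contra_neq val_inj nij) ?(contra_neq val_inj njk).
have [i <-] := axf_surj ax a; have [k <-] := axf_surj ax b.
have [j <-] := axf_surj ax c; rewrite !axis_ltE => aA bA ij jk.
by have := contA i j k (ltnW ij) (ltnW jk); rewrite !ffunE; apply.
Qed.

Lemma mem_interval_closure A ax j :
  (axf ax j \in interval_closure A ax) <->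
  exists i k : 'I_#|C|, [/\ (i <= j)%N, (j <= k)%N, axf ax i \in A & axf ax k \in A].
Proof.
rewrite inE; split=> [/existsP [y /existsP [z /and4P []]]|[i [k [ij jk iA kA]]]].
  have [i <-] := axf_surj ax y; have [k <-] := axf_surj ax z.
  by rewrite !axis_leE => iA kA ij jk; exists i, k.
apply/existsP; exists (axf ax i); apply/existsP; exists (axf ax k).
by rewrite iA kA !axis_leE ij jk.
Qed.

Lemma interval_closure_is_interval A ax : is_interval (interval_closure A ax) ax.
Proof.
apply/is_interval_contiguous => i j k ij jk; rewrite !ffunE.
move=> /mem_interval_closure [i1 [_ [i1i _ i1A _]]].
move=> /mem_interval_closure [_ [k1 [_ kk1 _ k1A]]].
apply/mem_interval_closure; exists i1, k1.
by rewrite (leq_trans i1i ij) (leq_trans jk kk1).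
Qed.

Lemma subset_interval_closure A ax : A \subset interval_closure A ax.
Proof.
apply/subsetP => c; have [j <- jA] := axf_surj ax c.
by apply/mem_interval_closure; exists j, j.
Qed.

Lemma interfering_closure A ax : interfering A ax = interval_closure A ax :\: A.
Proof.
apply/setP => c; have [j <-] := axf_surj ax c.
rewrite in_setD inE; have [//|jA /=] := boolP (axf ax j \in A).
apply/idP/idP => [/existsP [a /existsP [b /and4P []]]|].
  have [i <-] := axf_surj ax a; have [k <-] := axf_surj ax b.
  rewrite !axis_ltE => iA kA ij jk; apply/mem_interval_closure.
  by exists i, k; rewrite (ltnW ij) (ltnW jk).
move=> /mem_interval_closure [i [k [ij jk iA kA]]].
have neq_j (l : 'I_#|C|) : axf ax l \in A -> (l != j :> nat).
  by apply: contraTneq => /val_inj ->; rewrite (negbTE jA).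
apply/existsP; exists (axf ax i); apply/existsP; exists (axf ax k).
by rewrite iA kA !axis_ltE !ltn_neqAle ij jk (neq_j _ iA) eq_sym (neq_j _ kA).
Qed.

Lemma card_interval_closure A ax :
  #|interval_closure A ax| = (#|A| + #|interfering A ax|)%N.
Proof.
rewrite interfering_closure cardsD (setIidPr (subset_interval_closure A ax)).
by rewrite subnKC // subset_leq_card // subset_interval_closure.
Qed.

Section NotInterval.
Context {A : {set C}} {ax : axis C}.
Hypothesis nintA : ~ is_interval A ax.

Lemma not_interval_witness :
  exists a b c, [/\ a \in A, b \in A, axis_lt ax a c, axis_lt ax c b & c \notin A].
Proof.
apply: NNPP => nwit; apply: nintA => a b c aA bA ac cb.
by apply/negPn/negP => cA; apply: nwit; exists a, b, c.
Qed.

Lemma not_interval_card_gt1 : (1 < #|A|)%N.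
Proof.
have [a [b [c [+ + + + _]]]] := not_interval_witness.
have [i <-] := axf_surj ax a; have [k <-] := axf_surj ax b.
have [j <-] := axf_surj ax c; rewrite !axis_ltE => iA kA ij jk.
have neq_ik : axf ax i != axf ax k.
  by rewrite (inj_eq (@axf_inj ax)) -(inj_eq val_inj) neq_ltn (ltn_trans ij jk).
have sub : [set axf ax i; axf ax k] \subset A.
  by apply/subsetP => x; rewrite !inE => /orP [] /eqP ->.
by have := subset_leq_card sub; rewrite cards2 neq_ik.
Qed.

Lemma not_interval_interfering_gt0 : (0 < #|interfering A ax|)%N.
Proof.
have [a [b [c [aA bA ac cb cA]]]] := not_interval_witness.
rewrite card_gt0; apply/set0Pn; exists c; rewrite inE cA /=.
by apply/existsP; exists a; apply/existsP; exists b; rewrite aA bA ac cb.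
Qed.

End NotInterval.

End AxisPositions.

Lemma big_set_nth (V : zmodType) (T : Type) (F : T -> V) x0 (s : seq T) i y :
  (i < size s)%N ->
  \sum_(x <- set_nth x0 s i y) F x = \sum_(x <- s) F x - F (nth x0 s i) + F y.
Proof.
elim: s i => [//|a s IHs] [_|i /IHs] /=; rewrite !big_cons.
  by rewrite [F a + _]addrC addrK addrC.
by move=> ->; rewrite !addrA.
Qed.

Lemma appvec_bij (C : finType) (ax : axis C) : bijective (fun A : {set C} => appvec A ax).
Proof.
exists (fun x : {ffun 'I_#|C| -> bool} => [set c | [exists i, (axf ax i == c) && x i]]).
  move=> A; apply/setP => c; rewrite inE; have [j <-] := axf_surj ax c.
  apply/existsP/idP => [[i /andP [/eqP /axf_inj ->]]|jA]; first by rewrite ffunE.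
  by exists j; rewrite eqxx ffunE.
move=> x; apply/ffunP => j; rewrite ffunE inE.
apply/existsP/idP => [[i /andP [/eqP /axf_inj -> //]]|xj].
by exists j; rewrite eqxx.
Qed.

Section AllBallots.
Context {C : finType} {R : realType} {g : {ffun 'I_#|C| -> bool} -> R}.

Definition nonempty_ballots : seq {set C} := [seq A <- enum {set C} | A != set0].

Lemma nonempty_ballots_profile : is_profile nonempty_ballots.
Proof. by apply/allP => A; rewrite mem_filter => /andP []. Qed.

Lemma total_cost_nonempty_ballots (ax : axis C) :
  total_cost g nonempty_ballots ax = \sum_x g x - g [ffun => false].
Proof.
rewrite /total_cost big_filter big_enum_cond /=.
rewrite (reindex (fun A : {set C} => appvec A ax)) /=; last exact/onW_bij/appvec_bij.
rewrite [in RHS](bigD1 set0) //=.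
have -> : appvec set0 ax = [ffun => false] by apply/ffunP => j; rewrite !ffunE inE.
by rewrite addrC addrK.
Qed.

Lemma in_rule_nonempty_ballots (ax : axis C) : in_rule g nonempty_ballots ax.
Proof. by move=> ax'; rewrite !total_cost_nonempty_ballots. Qed.

Hypothesis g0_contiguous : forall x, g x = 0 <-> contiguous x.
Hypothesis monotone_g : ballot_monotone g.

Lemma cost_le_closure_interval {A : {set C}} {ax ax' : axis C} :
  A != set0 -> ~ is_interval A ax -> is_interval (interval_closure A ax) ax' ->
  cost g A ax' <= cost g A ax.
Proof.
move=> A0 nintA intA'.
have A_in : A \in nonempty_ballots by rewrite mem_filter A0 mem_enum.
have lt_idx : (index A nonempty_ballots < size nonempty_ballots)%N by rewrite index_mem.
have := monotone_g _ _ _ nonempty_ballots_profile lt_idx (in_rule_nonempty_ballots ax).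
rewrite nth_index // => /(_ nintA ax'); rewrite /total_cost !big_set_nth // nth_index //.
rewrite -![\sum_(B <- _) _]/(total_cost g _ _) !total_cost_nonempty_ballots.
have cost0 ax2 : is_interval (interval_closure A ax) ax2 ->
    cost g (interval_closure A ax) ax2 = 0.
  by move/is_interval_contiguous/g0_contiguous.
rewrite !cost0 //; first lra.
exact: interval_closure_is_interval.
Qed.

End AllBallots.

Definition gap_vec (n k i : nat) : {ffun 'I_n -> bool} :=
  [ffun j : 'I_n => (j < k.-1)%N || (nat_of_ord j == k.-1 + i)%N].

Section GapAxis.
Context {C : finType} {A : {set C}} (ax : axis C) {b : C}.
Hypotheses (nintA : ~ is_interval A ax) (bA : b \in A).

Let A' := interval_closure A ax.
Let I := interfering A ax.
Let k := #|A|.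
Let i := #|I|.

Let gap_enum := enum (A :\ b) ++ enum I ++ b :: enum (~: A').

Let sub_A_A' : A \subset A' := subset_interval_closure A ax.

Lemma mem_interfering x : x \in I -> x \in A' /\ x \notin A.
Proof. by rewrite /I interfering_closure inE => /andP [-> ->]. Qed.

Lemma card_setD1_ballot : #|A :\ b| = k.-1.
Proof. by rewrite /k (cardsD1 b A) bA. Qed.

Lemma size_gap_enum : size gap_enum = #|C|.
Proof.
rewrite !size_cat /= -!cardE card_setD1_ballot.
have := cardsC A'; rewrite card_interval_closure -/k -/i.
have k_gt0 : (0 < k)%N by apply/card_gt0P; exists b.
by rewrite /k in k_gt0 * => <-; lia.
Qed.

Lemma uniq_gap_enum : uniq gap_enum.
Proof.
rewrite /gap_enum cat_uniq enum_uniq /=; apply/andP; split.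
  apply/hasPn => x; rewrite mem_cat inE !mem_enum in_setD1 in_setC.
  case/orP => [/mem_interfering [_ /negbTE ->]|/orP [/eqP ->|]]; rewrite ?andbF ?eqxx //.
  by apply: contra => /andP [_]; apply: (subsetP sub_A_A').
rewrite cat_uniq cons_uniq !enum_uniq mem_enum in_setC negbK (subsetP sub_A_A' b bA) /=.
rewrite andbT negb_or mem_enum; apply/andP; split.
  by apply/negP => /mem_interfering [_]; rewrite bA.
apply/hasPn => x; rewrite !mem_enum in_setC => xA'.
by apply/negP => /mem_interfering [+ _]; apply/negP.
Qed.

Lemma nth_gap_enum j : (j < #|C|)%N ->
  ((nth b gap_enum j \in A) = (j < k.-1)%N || (j == k.-1 + i)%N) /\
  ((nth b gap_enum j \in A') = (j <= k.-1 + i)%N).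
Proof.
move=> jC; have cardA' := card_interval_closure A ax; have maxA' := max_card A'.
rewrite -/A' -/k -/I -/i in cardA' maxA'.
rewrite nth_cat -cardE card_setD1_ballot; case: ltnP => j1.
  have : nth b (enum (A :\ b)) j \in A :\ b.
    by rewrite -mem_enum mem_nth // -cardE card_setD1_ballot.
  rewrite inE => /andP [_ xA]; rewrite xA (subsetP sub_A_A') //.
  by split; apply/esym; lia.
rewrite nth_cat -cardE -/i; case: ltnP => j2.
  have : nth b (enum I) (j - k.-1) \in I by rewrite -mem_enum mem_nth // -cardE.
  by move=> /mem_interfering [-> /negbTE ->]; split; apply/esym; lia.
case eq_j : (j - k.-1 - i)%N => [|n] /=.
  by rewrite bA (subsetP sub_A_A') //; split; apply/esym; lia.
have : nth b (enum (~: A')) n \in ~: A'.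
  by rewrite -mem_enum mem_nth // -cardE cardsCs setCK; lia.
rewrite inE => xA'; rewrite (negbTE xA') (contraNF (subsetP sub_A_A' _) xA').
by split; apply/esym; lia.
Qed.

Lemma gap_enum_inj : injectiveb [ffun j : 'I_#|C| => nth b gap_enum j].
Proof.
apply/injectiveP => j1 j2; rewrite !ffunE => /eqP.
by rewrite nth_uniq ?size_gap_enum ?uniq_gap_enum // => /eqP /val_inj.
Qed.

Definition gap_axis : axis C :=
  exist (fun f : {ffun _ -> C} => injectiveb f) _ gap_enum_inj.

Lemma axf_gap_axis j : axf gap_axis j = nth b gap_enum j.
Proof. by rewrite /axf /= ffunE. Qed.

Lemma appvec_gap_axis : appvec A gap_axis = gap_vec #|C| k i.
Proof.
by apply/ffunP => j; rewrite !ffunE axf_gap_axis (nth_gap_enum _ (ltn_ord j)).1.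
Qed.

Lemma closure_is_interval_gap_axis : is_interval A' gap_axis.
Proof.
apply/is_interval_contiguous => j1 j2 j3 _ j23; rewrite !ffunE !axf_gap_axis.
rewrite (nth_gap_enum _ (ltn_ord j2)).2 (nth_gap_enum _ (ltn_ord j3)).2 => _.
exact: leq_trans.
Qed.

Lemma last_gap_lt : (k.-1 + i < #|C|)%N.
Proof.
have := max_card A'; rewrite card_interval_closure -/k -/I -/i.
by have := not_interval_card_gt1 nintA; have := not_interval_interfering_gt0 nintA; lia.
Qed.

Let j_last : 'I_#|C| := Ordinal last_gap_lt.
Let j_first : 'I_#|C| := Ordinal (leq_ltn_trans (leq0n _) last_gap_lt).
Let j_gap : 'I_#|C| := Ordinal (leq_ltn_trans (leq_addr i _) last_gap_lt).

Lemma gap_vec_ends : gap_vec #|C| k i j_first /\ gap_vec #|C| k i j_last.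
Proof.
rewrite !ffunE /= eqxx orbT; split=> //.
by have := not_interval_card_gt1 nintA; rewrite -/k; lia.
Qed.

Lemma not_interval_gap_axis : ~ is_interval A gap_axis.
Proof.
rewrite is_interval_contiguous appvec_gap_axis => cont.
have := cont j_first j_gap j_last (leq0n _) (leq_addr _ _) gap_vec_ends.1 gap_vec_ends.2.
rewrite ffunE /= ltnn /= => /eqP.
by have := not_interval_interfering_gt0 nintA; rewrite -/I -/i; lia.
Qed.

Lemma interval_closure_gap_axis : interval_closure A gap_axis = A'.
Proof.
apply/setP => c; have [j <-] := axf_surj gap_axis c.
rewrite [in RHS]axf_gap_axis (nth_gap_enum _ (ltn_ord j)).2.
apply/idP/idP => [/mem_interval_closure [_ [j3 [_ j_j3 _]]]|j_le].
  rewrite axf_gap_axis (nth_gap_enum _ (ltn_ord j3)).1 => j3A.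
  apply: (leq_trans j_j3); case/orP: j3A => [/ltnW j3k|/eqP ->//].
  exact: leq_trans j3k (leq_addr _ _).
have [first_A last_A] := gap_vec_ends; rewrite -appvec_gap_axis !ffunE in first_A last_A.
by apply/mem_interval_closure; exists j_first, j_last.
Qed.

End GapAxis.

Theorem mainTheorem13 (C : finType) (R : realType)
  (g : {ffun 'I_#|C| -> bool} -> R) :
  (3 <= #|C|)%N ->
  (forall x, 0 <= g x) ->
  (forall x, g x = 0 <-> contiguous x) ->
  (forall x, g x = g (revvec x)) ->
  ballot_monotone g ->
  exists h : nat -> nat -> R,
    forall (A : {set C}) (ax : axis C),
      A != set0 -> ~ is_interval A ax ->
      cost g A ax = h #|A| #|interfering A ax|.
Proof.
move=> _ _ g0_contiguous _ monotone_g.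
exists (fun k i => g (gap_vec #|C| k i)) => A ax A0 nintA.
have [b bA] := set0Pn _ A0.
have le_gap := cost_le_closure_interval g0_contiguous monotone_g A0 nintA
  (closure_is_interval_gap_axis ax bA).
have closure_gap : is_interval (interval_closure A (gap_axis ax bA)) ax.
  by rewrite (interval_closure_gap_axis ax nintA); exact: interval_closure_is_interval.
have ge_gap := cost_le_closure_interval g0_contiguous monotone_g A0
  (not_interval_gap_axis ax nintA bA) closure_gap.
rewrite -(appvec_gap_axis ax bA) -/(cost g A _).
by apply/eqP; rewrite eq_le ge_gap le_gap.
Qed.
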